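(* Let $b>1$, let $(p,R,I)$ be proper with $I$ non-empty, let $k$ be the greatest divisor of $p$ coprime with $b$ and $d=p/k$. Then: (a) for all distinct $x,x'\in\{0,\ldots,k-1\}$, the states $(xd,\bot)$ and $(x'd,\bot)$ of $\mathcal{C}_{R,p,I}$ are not Nerode-equivalent; (b) the states of $\mathcal{C}_{R,p,I}$ that belong to $0$-circuits are pairwise Nerode-inequivalent; (c) the initial state of $\mathcal{C}_{R,p,I}$ is not Nerode-equivalent to any other state.
   Context: $A_b=\{0,\ldots,b-1\}$. Given $p\ge1$, $R\subseteq\{0,\ldots,p-1\}$, finite $I\subseteq\mathbb{N}$, let $S=(R+p\mathbb{N})\oplus I$ ($\oplus$ = symmetric difference). $(p,R,I)$ is proper if $p$ is the smallest positive integer for which $S=(R'+p\mathbb{N})\oplus I'$ for some $R'\subseteq\{0,\ldots,p-1\}$ and finite $I'$. $\mathcal{A}_{R,p}$: states $\{0,\ldots,p-1\}$, initial $0$, final $R$, transitions $n\xrightarrow{a}(nb+a)\bmod p$. With $m=\max I$, $\mathcal{B}_I$: states $\{0,\ldots,m\}\cup\{\bot\}$, initial $0$, final $I$, transitions $i\xrightarrow{a}ib+a$ if $ib+a\le m$, else $i\xrightarrow{a}\bot$, and $\bot\xrightarrow{a}\bot$. $\mathcal{C}_{R,p,I}$ is the accessible part of the product of $\mathcal{A}_{R,p}$ and $\mathcal{B}_I$ (initial state $(0,0)$, componentwise transitions), with $(s,t)$ final iff exactly one of $s\in R$, $t\in I$ holds. Two states are Nerode-equivalent if for every word $u$, the states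 reached from them by reading $u$ are both final or both non-final. A $0$-circuit is a circuit all of whose transitions are labelled $0$. *)

From mathcomp Require Import all_boot.
Set Implicit Arguments. Unset Strict Implicit. Unset Printing Implicit Defensive.

(* membership in S = (R + pN) (+) I *)
Definition inS (p : nat) (R I : seq nat) (n : nat) : bool :=
  (n %% p \in R) (+) (n \in I).

Definition proper_triple (p : nat) (R I : seq nat) : Prop :=
  0 < p /\ all (fun r => r < p) R /\
  forall (p' : nat) (R' I' : seq nat), 0 < p' -> all (fun r => r < p') R' ->
    (forall n, inS p R I n = inS p' R' I' n) -> p <= p'.

Definition word_over (b : nat) (u : seq nat) : bool := all (fun a => a < b) u.

(* states of the product automaton: (s, t) with t = None standing for bottom *)
Definition state := (nat * option nat)%type.

Definition maxI (I : seq nat) : nat := \max_(i <- I) i.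

Definition stepB (b : nat) (I : seq nat) (t : option nat) (a : nat) : option nat :=
  match t with
  | Some i => if i * b + a <= maxI I then Some (i * b + a) else None
  | None => None
  end.

Definition stepA (b p : nat) (s a : nat) : nat := (s * b + a) %% p.

Definition stepC (b p : nat) (I : seq nat) (q : state) (a : nat) : state :=
  (stepA b p q.1 a, stepB b I q.2 a).

Definition runC (b p : nat) (I : seq nat) (q : state) (u : seq nat) : state :=
  foldl (stepC b p I) q u.

Definition initC : state := (0, Some 0).

Definition finalC (R I : seq nat) (q : state) : bool :=
  (q.1 \in R) (+) (match q.2 with Some i => i \in I | None => false end).

(* q is a state of C_{R,p,I} (accessible part) *)
Definition accessibleC (b p : nat) (I : seq nat) (q : state) : Prop :=
  exists u, word_over b u /\ runC b p I initC u = q.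

Definition nerode_equiv (b p : nat) (R I : seq nat) (q q' : state) : Prop :=
  forall u, word_over b u ->
    finalC R I (runC b p I q u) = finalC R I (runC b p I q' u).

(* q lies on a 0-circuit (a nonempty circuit all of whose labels are 0);
   the automaton being deterministic, this means 0^n leads back to q for some n >= 1 *)
Definition on_zero_circuit (b p : nat) (I : seq nat) (q : state) : Prop :=
  exists n, 0 < n /\ runC b p I q (nseq n 0) = q.

Definition kpart (p b : nat) : nat :=
  \max_(j < p.+1 | (j %| p) && coprime j b) j.

From mathcomp Require Import all_boot zify.
Set Implicit Arguments. Unset Strict Implicit. Unset Printing Implicit Defensive.

(* Reading u from a bottom state (s, None) accepts iff s * b ^ |u| + val u lies
   in R + pN.  Since words of length n take every value below b ^ n >= p, two
   equivalent bottom states (s, None), (s', None) make R + pN invariant under the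
   shift (s - s') * b ^ n; properness says p is the least period of R + pN, so
   s * b ^ n = s' * b ^ n (mod p).  For s = x d, s' = x' d this forces x = x'
   (mod k), as b is invertible mod k; for states on 0-circuits, which apart from
   the initial state are bottom states fixed by some b ^ c modulo p, it forces
   s = s'.  Against the initial state, a state reached by a word of value v > 0
   behaves like a shift by v * b ^ n: words with values above max I give
   p | v * b ^ n, and then a word whose value lies in I separates the two. *)

Definition wordval (b acc : nat) (u : seq nat) : nat :=
  foldl (fun acc a => acc * b + a) acc u.

Definition inR (p : nat) (R : seq nat) (n : nat) : bool := n %% p \in R.

Section WordValue.
Variable b : nat.

Lemma wordval_cat acc u w : wordval b acc (u ++ w) = wordval b (wordval b acc u) w.
Proof. by rewrite /wordval foldl_cat. Qed.

Lemma wordvalE acc u : wordval b acc u = acc * b ^ size u + wordval b 0 u.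
Proof.
elim: u acc => [|a u IH] acc /=; first by rewrite expn0 muln1 addn0.
rewrite IH [wordval _ (0 * b + a) u]IH expnS /=.
rewrite mul0n add0n mulnDl addnA mulnA; lia.
Qed.

Lemma leq_wordval acc u : 0 < b -> acc <= wordval b acc u.
Proof.
move=> b_gt0; rewrite wordvalE; apply: leq_trans (leq_addr _ _).
by rewrite leq_pmulr // expn_gt0 b_gt0.
Qed.

Lemma wordval_mod p acc u : wordval b (acc %% p) u = wordval b acc u %[mod p].
Proof. by rewrite (wordvalE (acc %% p)) (wordvalE acc) -modnDml -modnMml modn_mod modnMml modnDml. Qed.

Lemma wordval_nseq0 acc c : wordval b acc (nseq c 0) = acc * b ^ c.
Proof.
rewrite wordvalE size_nseq; suff -> : wordval b 0 (nseq c 0) = 0 by rewrite addn0.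
by elim: c => //= c IH; rewrite mul0n.
Qed.

Fixpoint digits (n v : nat) : seq nat :=
  if n is n'.+1 then rcons (digits n' (v %/ b)) (v %% b) else [::].

Lemma digitsP n v : 0 < b -> v < b ^ n ->
  [/\ word_over b (digits n v), size (digits n v) = n & wordval b 0 (digits n v) = v].
Proof.
move=> b_gt0; elim: n v => [|n IH] v /=; first by rewrite expn0 ltnS leqn0 => /eqP ->.
rewrite expnS => v_lt.
have [|W S V] := IH (v %/ b); first by rewrite ltn_divLR // mulnC.
split.
- by rewrite /word_over all_rcons ltn_pmod.
- by rewrite size_rcons S.
- by rewrite /wordval foldl_rcons -/(wordval b 0 _) V -divn_eq.
Qed.

End WordValue.

Section Run.
Variables (b p : nat) (I : seq nat).

Lemma runC_cat q u w : runC b p I q (u ++ w) = runC b p I (runC b p I q u) w.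
Proof. by rewrite /runC foldl_cat. Qed.

Lemma runC_fst q u : q.1 < p -> (runC b p I q u).1 = wordval b q.1 u %% p.
Proof.
elim: u q => [|a u IH] q /= q_lt; first by rewrite modn_small.
have p_gt0 : 0 < p by apply: leq_ltn_trans q_lt.
by rewrite IH ?ltn_pmod ?wordval_mod.
Qed.

Lemma runC_snd_bot s u : (runC b p I (s, None) u).2 = None.
Proof. by elim: u s => //= a u IH s; rewrite IH. Qed.

Lemma runC_snd_some s i u : 0 < b -> i <= maxI I ->
  (runC b p I (s, Some i) u).2 =
  if wordval b i u <= maxI I then Some (wordval b i u) else None.
Proof.
move=> b_gt0; elim: u s i => [|a u IH] s i /= i_le; first by rewrite i_le.
rewrite /stepC /=; case: ifP => [step_le|step_gt]; first by rewrite IH.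
rewrite runC_snd_bot; case: ifP => // val_le.
by have := leq_wordval (i * b + a) u b_gt0; lia.
Qed.

Lemma runC_init w : 0 < b -> 0 < p ->
  runC b p I initC w = (wordval b 0 w %% p,
    if wordval b 0 w <= maxI I then Some (wordval b 0 w) else None).
Proof. by move=> b_gt0 p_gt0; rewrite [LHS]surjective_pairing runC_fst ?runC_snd_some. Qed.

End Run.

Lemma periodic_addMn (T : Type) (f : nat -> T) g :
  (forall n, f (n + g) = f n) -> forall t n, f (n + t * g) = f n.
Proof. by move=> f_per; elim=> [|t IH] n; rewrite ?addn0 // mulSn addnA IH f_per. Qed.

Section Periodicity.
Variables (p : nat) (R I : seq nat).

Lemma eq_inR m n : m = n %[mod p] -> inR p R m = inR p R n.
Proof. by rewrite /inR => ->. Qed.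

Lemma inR_period n : inR p R (n + p) = inR p R n.
Proof. by apply: eq_inR; rewrite modnDr. Qed.

Lemma inR_window_periodic L delta : 0 < p ->
  (forall j, j < p -> inR p R (L + j + delta) = inR p R (L + j)) ->
  forall n, inR p R (n + delta) = inR p R n.
Proof.
move=> p_gt0 window n.
have L_le : L <= n + L * p by rewrite (leq_trans (leq_pmulr _ p_gt0)) ?leq_addl.
have n_repr : L + (n + L * p - L) %% p = n %[mod p].
  by rewrite modnDmr subnKC // addnC modnMDl.
rewrite -(eq_inR n_repr) -(window _ (ltn_pmod _ p_gt0)).
by apply: eq_inR; rewrite -modnDml -n_repr modnDml.
Qed.

Hypothesis pr : proper_triple p R I.

Lemma proper_period_leq g : 0 < g -> (forall n, inR p R (n + g) = inR p R n) -> p <= g.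
Proof.
move=> g_gt0 g_per; case: pr => _ [_ p_min].
apply: (p_min g [seq r <- iota 0 g | inR p R r] I g_gt0).
  by apply/allP => r; rewrite mem_filter mem_iota => /and3P[_ _].
move=> n; rewrite /inS mem_filter mem_iota /= ltn_pmod // andbT.
by rewrite -/(inR p R n) {1}(divn_eq n g) addnC periodic_addMn.
Qed.

(* Bezout makes gcd(p, delta) a period too, and properness forces it to be p. *)
Lemma proper_period_dvd delta : (forall n, inR p R (n + delta) = inR p R n) -> p %| delta.
Proof.
move=> delta_per; have p_gt0 : 0 < p by case: pr.
have [a _ /dvdnP[c bezout]] := Bezoutl delta p_gt0.
have g_per n : inR p R (n + gcdn p delta) = inR p R n.
  by rewrite -(periodic_addMn delta_per a) -addnA bezout periodic_addMn // => m; exact: inR_period.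
have g_le : gcdn p delta <= p by rewrite dvdn_leq ?dvdn_gcdl.
have g_gt0 : 0 < gcdn p delta by rewrite gcdn_gt0 p_gt0.
have <- : gcdn p delta = p by apply/eqP; rewrite eqn_leq g_le proper_period_leq.
exact: dvdn_gcdr.
Qed.

End Periodicity.

Lemma eqmod_mul_expM s b c t p :
  s * b ^ c = s %[mod p] -> s * b ^ (c * t) = s %[mod p].
Proof.
move=> s_fix; elim: t => [|t IH]; first by rewrite muln0 expn0 muln1.
by rewrite mulnS expnD mulnA -modnMml s_fix modnMml IH.
Qed.

Lemma eqmod_coprime_cancel k d m x x' : 0 < d -> coprime k m ->
  x * d * m = x' * d * m %[mod d * k] -> x = x' %[mod k].
Proof.
wlog le : x x' / x' <= x => [Hwlog d_gt0 cop E|d_gt0 cop].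
  by case: (leqP x' x) => [|/ltnW] le; [|symmetry]; apply: Hwlog => //; symmetry.
move/eqP; rewrite !eqn_mod_dvd ?leq_mul2r ?le ?orbT //.
by rewrite -!mulnBl mulnAC mulnC dvdn_pmul2r // Gauss_dvdl // -eqn_mod_dvd // => /eqP.
Qed.

Section Nerode.
Variables (b p : nat) (R I : seq nat).

Lemma nerode_equiv_sym q q' : nerode_equiv b p R I q q' -> nerode_equiv b p R I q' q.
Proof. by move=> N u W; rewrite N. Qed.

Lemma finalC_runC_init w : 0 < b -> 0 < p ->
  finalC R I (runC b p I initC w) = inS p R I (wordval b 0 w).
Proof.
move=> b_gt0 p_gt0; rewrite runC_init // /finalC /inS /=.
case: ifP => // gt; case I_w: (wordval b 0 w \in I) => //.
by rewrite (leq_bigmax_seq _ I_w) in gt.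
Qed.

Lemma finalC_runC_bot s u : s < p ->
  finalC R I (runC b p I (s, None) u) = inR p R (wordval b s u).
Proof. by move=> s_lt; rewrite /finalC runC_snd_bot runC_fst //= addbF. Qed.

Lemma inS_gt_maxI n : maxI I < n -> inS p R I n = inR p R n.
Proof.
move=> gt; rewrite /inS -/(inR p R n); case I_n: (n \in I); last exact: addbF.
by move: gt; rewrite ltnNge (leq_bigmax_seq _ I_n).
Qed.

Hypotheses (pr : proper_triple p R I) (b_gt1 : 1 < b).

Let b_gt0 : 0 < b. Proof. exact: ltnW. Qed.
Let p_gt0 : 0 < p. Proof. by case: pr. Qed.

Lemma nerode_bot_eqmod s s' n : s < p -> s' < p -> p <= b ^ n ->
  nerode_equiv b p R I (s, None) (s', None) -> s * b ^ n = s' * b ^ n %[mod p].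
Proof.
wlog le : s s' / s' <= s => [Hwlog s_lt s'_lt p_le N|s_lt s'_lt p_le N].
  case: (leqP s' s) => [|/ltnW] le; [|symmetry]; apply: Hwlog => //.
  exact: nerode_equiv_sym.
apply/eqP; rewrite eqn_mod_dvd ?leq_mul2r ?le ?orbT // -mulnBl.
apply: (proper_period_dvd pr).
apply: (inR_window_periodic (L := s' * b ^ n) p_gt0) => j j_lt.
have [W S V] := digitsP b_gt0 (leq_trans j_lt p_le).
have := N _ W; rewrite !finalC_runC_bot // !(wordvalE _ s) !(wordvalE _ s') S V => <-.
by rewrite addnAC -mulnDl subnKC.
Qed.

Lemma kpart_dvdn_coprime : kpart p b %| p /\ coprime (kpart p b) b.
Proof.
have one_lt : 1 < p.+1 by rewrite ltnS.
rewrite /kpart (bigmax_eq_arg (Ordinal one_lt)) ?dvd1n ?coprime1n //.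
by case: arg_maxnP; rewrite ?dvd1n ?coprime1n // => j /andP.
Qed.

Lemma kpart_bot_not_nerode x x' : x < kpart p b -> x' < kpart p b -> x != x' ->
  let d := p %/ kpart p b in ~ nerode_equiv b p R I (x * d, None) (x' * d, None).
Proof.
have [k_dvd k_cop] := kpart_dvdn_coprime; move=> x_lt x'_lt neq d N.
have p_eq : p = d * kpart p b by rewrite /d divnK.
have d_gt0 : 0 < d by move: p_gt0; rewrite p_eq muln_gt0 => /andP[].
have lt_p y : y < kpart p b -> y * d < p.
  by move=> y_lt; rewrite [X in _ < X]p_eq [d * _]mulnC ltn_pmul2r.
have p_le : p <= b ^ p by exact/ltnW/ltn_expl.
have : x = x' %[mod kpart p b].
  apply: (eqmod_coprime_cancel d_gt0 (coprimeXr p k_cop)); rewrite -p_eq.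
  exact: nerode_bot_eqmod (lt_p _ x_lt) (lt_p _ x'_lt) p_le N.
by rewrite !modn_small // => /eqP; rewrite (negbTE neq).
Qed.

Lemma zero_circuit_cases q : accessibleC b p I q -> on_zero_circuit b p I q ->
  q = initC \/ exists s, [/\ q = (s, None), s < p &
                            exists2 c, 0 < c & s * b ^ c = s %[mod p]].
Proof.
move=> [w [_ <-]] [c [c_gt0]]; rewrite runC_init //; set v := wordval b 0 w.
case: ifP => v_le cyc.
  have := congr1 snd cyc; rewrite runC_snd_some //= wordval_nseq0.
  case: ifP => // _ [v_fix].
  left; suff -> : v = 0 by rewrite mod0n.
  apply/eqP; rewrite eqn0Ngt; apply/negP => v_gt0.
  have b_pow : 1 < b ^ c by apply: leq_ltn_trans (ltn_expl c b_gt1).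
  by move: (ltn_Pmulr b_pow v_gt0); rewrite v_fix ltnn.
right; exists (v %% p); split; rewrite ?ltn_pmod //; exists c => //.
have := congr1 fst cyc; rewrite runC_fst /= ?ltn_pmod // wordval_nseq0 => ->.
by rewrite modn_mod.
Qed.

(* Both states are fixed by the common power b ^ (c * c' * p), and p <= b ^ (c * c' * p). *)
Lemma bot_cycles_not_nerode s s' c c' : s < p -> s' < p -> s != s' ->
  0 < c -> 0 < c' -> s * b ^ c = s %[mod p] -> s' * b ^ c' = s' %[mod p] ->
  ~ nerode_equiv b p R I (s, None) (s', None).
Proof.
move=> s_lt s'_lt neq c_gt0 c'_gt0 s_fix s'_fix N.
set n := c * c' * p.
have p_le : p <= b ^ n.
  rewrite ltnW // (leq_ltn_trans _ (ltn_expl n b_gt1)) // leq_pmull //.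
  by rewrite muln_gt0 c_gt0.
have s_fixn : s * b ^ n = s %[mod p] by rewrite /n -mulnA eqmod_mul_expM.
have s'_fixn : s' * b ^ n = s' %[mod p] by rewrite /n [c * c']mulnC -mulnA eqmod_mul_expM.
have := nerode_bot_eqmod s_lt s'_lt p_le N.
by rewrite s_fixn s'_fixn !modn_small // => /eqP; rewrite (negbTE neq).
Qed.

Lemma init_not_nerode q : I != [::] -> accessibleC b p I q -> q != initC ->
  ~ nerode_equiv b p R I initC q.
Proof.
move=> I_nil [w [_ <-]] q_neq N; set v := wordval b 0 w.
have v_gt0 : 0 < v.
  rewrite lt0n; apply: contraNneq q_neq => v0.
  by rewrite runC_init // -/v v0 mod0n.
have shift u : word_over b u ->
    inS p R I (v * b ^ size u + wordval b 0 u) = inS p R I (wordval b 0 u).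
  move=> U; rewrite -(wordvalE _ v) -wordval_cat -finalC_runC_init //.
  by rewrite runC_cat -N // finalC_runC_init.
set n := maxI I + p.+1.
have n_lt : n < b ^ n by exact: ltn_expl.
have shift_gt : maxI I < v * b ^ n.
  by rewrite (leq_trans _ (leq_pmull _ v_gt0)) //; lia.
have p_dvd : p %| v * b ^ n.
  apply: (proper_period_dvd pr).
  apply: (inR_window_periodic (L := (maxI I).+1) p_gt0) => j j_lt.
  have [|U S V] := digitsP (n := n) (v := (maxI I).+1 + j) b_gt0; first lia.
  have := shift _ U; rewrite S V !inS_gt_maxI; [|lia|lia].
  by rewrite addnC.
have [x x_I] : exists x, x \in I by case: I I_nil => // x I' _; exists x; rewrite mem_head.
have x_le : x <= maxI I := leq_bigmax_seq _ x_I isT.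
have [|U S V] := digitsP (n := n) (v := x) b_gt0; first lia.
have := shift _ U; rewrite S V inS_gt_maxI; last lia.
case/dvdnP: p_dvd => c ->; rewrite /inS /inR modnMDl x_I.
by case: (x %% p \in R).
Qed.

End Nerode.

Theorem lemma39 (b p : nat) (R I : seq nat) :
  1 < b -> proper_triple p R I -> I != [::] ->
  let k := kpart p b in
  let d := p %/ k in
  (* (a) *)
  (forall x x', x < k -> x' < k -> x != x' ->
     ~ nerode_equiv b p R I (x * d, None) (x' * d, None)) /\
  (* (b) *)
  (forall q q', accessibleC b p I q -> accessibleC b p I q' ->
     on_zero_circuit b p I q -> on_zero_circuit b p I q' -> q != q' ->
     ~ nerode_equiv b p R I q q') /\
  (* (c) *)
  (forall q, accessibleC b p I q -> q != initC ->
     ~ nerode_equiv b p R I initC q).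
Proof.
move=> b_gt1 pr I_nil k d; split; [|split].
- exact: (kpart_bot_not_nerode pr b_gt1).
- move=> q q' Aq Aq' Zq Zq' neq.
  have [q_init|[s [q_bot s_lt [c c_gt0 s_fix]]]] := zero_circuit_cases pr b_gt1 Aq Zq.
    by rewrite q_init; apply: init_not_nerode; rewrite // eq_sym -q_init.
  have [q'_init|[s' [q'_bot s'_lt [c' c'_gt0 s'_fix]]]] := zero_circuit_cases pr b_gt1 Aq' Zq'.
    by rewrite q'_init => /nerode_equiv_sym; apply: init_not_nerode; rewrite // -q'_init.
  rewrite q_bot q'_bot; apply: bot_cycles_not_nerode s_fix s'_fix => //.
  by apply: contraNneq neq => s_eq; rewrite q_bot q'_bot s_eq.
- by move=> q; apply: init_not_nerode.
Qed.
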